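(* Let $\mathcal{E}_{\mathrm{MUB}}$ be the minimal Clifford measurement ensemble described in the context, let $V$ be any $n$-qubit Clifford unitary, $O=V^{\dagger}|\mathbf{0}\rangle\langle\mathbf{0}|V$, and for $U\in\mathcal{E}_{\mathrm{MUB}}$, $\mathbf{b}\in\{0,1\}^n$ let $\alpha_{U,\mathbf{b}}=\operatorname{tr}(O\,U^{\dagger}|\mathbf{b}\rangle\langle\mathbf{b}|U)=|\langle\mathbf{b}|UV^{\dagger}|\mathbf{0}\rangle|^2$. Then $$\sum_{U\in\mathcal{E}_{\mathrm{MUB}}}\max_{\mathbf{b}}\alpha_{U,\mathbf{b}}=2.$$ Moreover, for each $U\in\mathcal{E}_{\mathrm{MUB}}$, if the Z-Tableau of $UV^{\dagger}$ is $[C,D]$ and $r_U=\mathrm{rank}_{\mathbb{F}_2}(C)$, then exactly $2^{r_U}$ of the values $\alpha_{U,\mathbf{b}}$, $\mathbf{b}\in\{0,1\}^n$, equal $2^{-r_U}$ and the remaining $2^n-2^{r_U}$ equal $0$.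
   Context: Galois arithmetic: fix an irreducible polynomial $P_n(x)$ of degree $n$ over $\mathrm{GF}(2)$; integers $a=\sum_i a_i2^i\in\{0,\dots,2^n-1\}$ are identified with polynomials $\sum_ia_ix^i$ and row vectors $(a_0,\dots,a_{n-1})$, and $a\odot b=a(x)b(x)\bmod P_n(x)$. Let $\Gamma_{k,j}$ be the coefficient of $x^j$ in $x^k\bmod P_n$, and $M_n^{(0)}$ the $n\times n$ binary matrix with entries $\Gamma_{p+q,0}$. For $v\in\{0,\dots,2^n-1\}$ let $\alpha_{v,i,j}$ be the $j$-th entry of $(v\odot 2^i)M_n^{(0)}$ mod 2 and $g_i^{(v)}=\sqrt{-1}^{\,\alpha_{v,i,i}}X_i\prod_jZ_j^{\alpha_{v,i,j}}$ ($X_i,Z_i$ Paulis on qubit $i$). $\mathcal{E}_{\mathrm{MUB}}=\{\mathbb{I}\}\cup\{U_v\}_{v=0}^{2^n-1}$, where $U_v$ is a Clifford unitary with $U_v^{\dagger}Z_iU_v=\pm g_i^{(v)}$ for all $i$. Z-Tableau: for a Clifford unitary $W$, write $W^{\dagger}Z_iW=\pm\prod_{j=0}^{n-1}X_j^{\gamma_{ij}}Z_j^{\delta_{ij}}$ (up to phase) with $\gamma_{ij},\delta_{ij}\in\{0,1\}$; the Z-Tableau of $W$ is the pair $[C,D]$ of $n\times n$ binary matrices $C=[\gamma_{ij}]$, $D=[\delta_{ij}]$. *)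

From HB Require Import structures.
From mathcomp Require Import all_boot all_order all_algebra all_field.
Set Implicit Arguments. Unset Strict Implicit. Unset Printing Implicit Defensive.
Import Order.TTheory GRing.Theory Num.Theory.
Local Open Scope ring_scope.

(* Computational basis of n qubits: index a : 'I_(2^n), bit j of a is a_j,
   a = sum_j a_j 2^j (as in the paper's identification). *)
Definition bit (a j : nat) : bool := odd (a %/ 2 ^ j).

Lemma two_exp_gt0 (n : nat) : (0 < 2 ^ n)%N.
Proof. by rewrite expn_gt0. Qed.

Definition ket0 (n : nat) : 'I_(2 ^ n) := Ordinal (two_exp_gt0 n).

Definition dagger (m : nat) (A : 'M[algC]_m) : 'M[algC]_m := (map_mx Num.conj A)^T.

Definition unitary (m : nat) (A : 'M[algC]_m) : Prop := dagger A *m A = 1%:M.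

Definition Xop (n : nat) (i : 'I_n) : 'M[algC]_(2 ^ n) :=
  \matrix_(a, b) (if (bit a i != bit b i) &&
                     [forall j : 'I_n, (j != i) ==> (bit a j == bit b j)]
                  then 1 else 0).

Definition Zop (n : nat) (i : 'I_n) : 'M[algC]_(2 ^ n) :=
  \matrix_(a, b) (if a == b then (-1) ^+ bit b i else 0).

Definition mxpowF2 (m : nat) (A : 'M[algC]_m) (e : 'F_2) : 'M[algC]_m :=
  if e != 0 then A else 1%:M.

Definition mxprod (m n : nat) (F : 'I_n -> 'M[algC]_m) : 'M[algC]_m :=
  \big[mulmx/1%:M]_(j < n) F j.

Definition pauli (n : nat) (x z : 'rV['F_2]_n) : 'M[algC]_(2 ^ n) :=
  mxprod (fun j : 'I_n => mxpowF2 (Xop j) (x 0 j) *m mxpowF2 (Zop j) (z 0 j)).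

Definition clifford (n : nat) (W : 'M[algC]_(2 ^ n)) : Prop :=
  unitary W /\
  forall x z : 'rV['F_2]_n, exists (c : algC) (x' z' : 'rV['F_2]_n),
      dagger W *m pauli x z *m W = c *: pauli x' z'.

Definition z_tableau (n : nat) (W : 'M[algC]_(2 ^ n)) (C D : 'M['F_2]_n) : Prop :=
  forall i : 'I_n, exists c : algC, dagger W *m Zop i *m W = c *: pauli (row i C) (row i D).

Definition Gamma (P : {poly 'F_2}) (k j : nat) : 'F_2 := (('X ^+ k) %% P)`_j.

Definition M0 (n : nat) (P : {poly 'F_2}) : 'M['F_2]_n :=
  \matrix_(p < n, q < n) Gamma P (p + q) 0.

(* integer v in {0..2^n-1} identified with its bit vector / polynomial *)
Definition vpoly (n : nat) (v : 'rV['F_2]_n) : {poly 'F_2} := \sum_(j < n) (v 0 j)%:P * 'X^j.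

(* row vector of v (.) 2^i = v(x) x^i mod P *)
Definition gmul_row (n : nat) (P : {poly 'F_2}) (v : 'rV['F_2]_n) (i : nat) : 'rV['F_2]_n :=
  \row_(j < n) ((vpoly v * 'X ^+ i) %% P)`_j.

Definition alphaG (n : nat) (P : {poly 'F_2}) (v : 'rV['F_2]_n) (i j : 'I_n) : 'F_2 :=
  (gmul_row P v i *m M0 n P) 0 j.

Definition gen (n : nat) (P : {poly 'F_2}) (v : 'rV['F_2]_n) (i : 'I_n) : 'M[algC]_(2 ^ n) :=
  ('i ^+ (alphaG P v i i != 0)) *:
    (Xop i *m mxprod (fun j : 'I_n => mxpowF2 (Zop j) (alphaG P v i j))).

Definition MUB_family (n : nat) (P : {poly 'F_2}) (Uf : 'rV['F_2]_n -> 'M[algC]_(2 ^ n)) : Prop :=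
  forall v, clifford (Uf v) /\
    forall i : 'I_n, exists s : bool, dagger (Uf v) *m Zop i *m Uf v = ((-1) ^+ s) *: gen P v i.

Definition proj (n : nat) (b : 'I_(2 ^ n)) : 'M[algC]_(2 ^ n) := delta_mx b b.

Definition alphaU (n : nat) (V U : 'M[algC]_(2 ^ n)) (b : 'I_(2 ^ n)) : algC :=
  \tr ((dagger V *m proj (ket0 n) *m V) *m (dagger U *m proj b *m U)).

(* max_b alpha_{U,b} (all values are nonnegative reals) *)
Definition maxalpha (n : nat) (V U : 'M[algC]_(2 ^ n)) : algC :=
  \big[Num.max/0]_(b < 2 ^ n) alphaU V U b.

(* Label the Pauli operator X^x Z^z by (x, z) in F_2^n x F_2^n.  Expanding |b><b| in the
   diagonal Paulis gives |<b|W|0>|^2 = 2^-n sum_z (-1)^(z.b) <0|W^dag Z^z W|0>.  The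
   expectation vanishes unless W^dag Z^z W has no X-part, i.e. unless z lies in a subgroup K
   (the kernel of C for a Z-tableau [C, D] of W), and on K it is a +-1 character.  Hence
   |<b|W|0>|^2 takes the value |K|/2^n on 2^n/|K| = 2^(rank C) outcomes and vanishes on the
   others.

   For the sum, conjugation by the Clifford V permutes the Pauli labels.  The labels whose
   V-conjugate is diagonal form a set T of 2^n labels containing 0, and the maximal outcome
   probability of U is |T /\ L_U|/2^n, where L_U = {(z C_U, z D_U)} is the image of the
   Z-tableau of U.  For U = 1 and U = U_v these are {(0, z)} and {(z, z M_v)}; since x M_v
   determines v when x <> 0 (multiplication by a nonzero element of GF(2^n) is invertible),
   these 2^n + 1 subspaces meet only in 0 and cover all labels, so the maxima add up to
   (|T| + 2^n)/2^n = 2. *)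

From HB Require Import structures.
From mathcomp Require Import all_boot all_order all_algebra all_field.
Import Order.TTheory GRing.Theory Num.Theory.
Local Open Scope ring_scope.
Set Implicit Arguments. Unset Strict Implicit. Unset Printing Implicit Defensive.

Local Notation plabel n := ('rV['F_2]_n * 'rV['F_2]_n)%type.

Lemma F2_cases (e : 'F_2) : e = 0 \/ e = 1.
Proof. case: e => [[|[|k]] lt_e2]; [left|right|by []]; exact: val_inj. Qed.

Lemma pchar_F2 : 2 \in [pchar 'F_2]. Proof. exact: pchar_Fp. Qed.

Lemma addrr_F2 (V : lmodType 'F_2) (u : V) : u + u = 0.
Proof. by rewrite -mulr2n -scaler_nat (pchar_Fp_0 (isT : prime 2)) scale0r. Qed.

Lemma oppr_F2 (V : lmodType 'F_2) (u : V) : - u = u.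
Proof. by apply/esym/eqP; rewrite -addr_eq0 addrr_F2. Qed.

Definition sgn (e : 'F_2) : algC := (-1) ^+ (e != 0).

Lemma sgn0 : sgn 0 = 1. Proof. by rewrite /sgn eqxx. Qed.

Lemma sgnD (e f : 'F_2) : sgn (e + f) = sgn e * sgn f.
Proof.
rewrite /sgn -signr_addb.
by case: (F2_cases e) (F2_cases f) => -> [] ->; rewrite ?addr0 ?add0r ?(addrr_pchar2 pchar_F2).
Qed.

Lemma sgn_nat (b : bool) : sgn b%:R = (-1) ^+ b.
Proof. by case: b. Qed.

Lemma sgn_inj : injective sgn.
Proof. by move=> e f /signr_inj; case: (F2_cases e) (F2_cases f) => -> [] ->. Qed.

Lemma bits_inj n a b : (a < 2 ^ n)%N -> (b < 2 ^ n)%N ->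
  (forall j, (j < n)%N -> bit a j = bit b j) -> a = b.
Proof.
elim: n a b => [|n IH] a b; first by rewrite expn0 !ltnS !leqn0 => /eqP -> /eqP ->.
move=> ltan ltbn eq_ab.
have eq0 := eq_ab 0%N (ltn0Sn n); rewrite /bit !expn0 !divn1 in eq0.
have eq_half : (a %/ 2 = b %/ 2)%N.
  apply: IH; rewrite ?ltn_divLR -?expnSr // => j ltjn.
  by have := eq_ab j.+1 ltjn; rewrite /bit expnS !divnMA.
by rewrite -[a]odd_double_half -[b]odd_double_half eq0 -!divn2 eq_half.
Qed.

Definition bitrow n (a : 'I_(2 ^ n)) : 'rV['F_2]_n := \row_j (bit a j)%:R.

Lemma bitrow_inj n : injective (@bitrow n).
Proof.
move=> a b /rowP eq_ab; apply/val_inj/(@bits_inj n); rewrite ?ltn_ord // => j ltjn.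
have := eq_ab (Ordinal ltjn); rewrite !mxE.
by case: (bit a j) (bit b j) => [] [].
Qed.

Lemma card_rowF2 n : #|'rV['F_2]_n| = (2 ^ n)%N.
Proof. by rewrite card_mx card_Fp // mul1n. Qed.

Lemma bitrow_onto n (u : 'rV['F_2]_n) : u \in codom (@bitrow n).
Proof. by apply: inj_card_onto (@bitrow_inj n) _ u; rewrite card_rowF2 card_ord. Qed.

Definition rowbits n (u : 'rV['F_2]_n) : 'I_(2 ^ n) := iinv (bitrow_onto u).

Lemma rowbitsK n : cancel (@rowbits n) (@bitrow n).
Proof. by move=> u; apply: f_iinv. Qed.

Lemma bitrowK n : cancel (@bitrow n) (@rowbits n).
Proof. by move=> a; apply: bitrow_inj; rewrite rowbitsK. Qed.

Lemma bitrow_ket0 n : bitrow (ket0 n) = 0.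
Proof. by apply/rowP => j; rewrite !mxE /bit div0n. Qed.

Definition dot n (y u : 'rV['F_2]_n) : 'F_2 := (y *m u^T) 0 0.

Lemma dotDl n (y y' u : 'rV['F_2]_n) : dot (y + y') u = dot y u + dot y' u.
Proof. by rewrite /dot mulmxDl mxE. Qed.

Lemma dotDr n (y u u' : 'rV['F_2]_n) : dot y (u + u') = dot y u + dot y u'.
Proof. by rewrite /dot linearD mulmxDr mxE. Qed.

Lemma dotZl n c (y u : 'rV['F_2]_n) : dot (c *: y) u = c * dot y u.
Proof. by rewrite /dot -scalemxAl mxE. Qed.

Lemma dot0l n (u : 'rV['F_2]_n) : dot 0 u = 0.
Proof. by rewrite /dot mul0mx mxE. Qed.

Lemma dot0r n (u : 'rV['F_2]_n) : dot u 0 = 0.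
Proof. by rewrite /dot trmx0 mulmx0 mxE. Qed.

Lemma dotC n (y u : 'rV['F_2]_n) : dot y u = dot u y.
Proof. by rewrite /dot -[y *m _]trmxK trmx_mul trmxK mxE. Qed.

Lemma dot_deltal n (i : 'I_n) (u : 'rV['F_2]_n) : dot (delta_mx 0 i) u = u 0 i.
Proof. by rewrite /dot -rowE !mxE. Qed.

Section Dagger.
Variable m : nat.
Implicit Types A B : 'M[algC]_m.

Lemma dagger_mul A B : dagger (A *m B) = dagger B *m dagger A.
Proof. by rewrite /dagger map_mxM trmx_mul. Qed.

Lemma daggerK A : dagger (dagger A) = A.
Proof. by apply/matrixP => i j; rewrite !mxE conjCK. Qed.

Lemma dagger1 : dagger 1%:M = 1%:M :> 'M_m.
Proof. by rewrite /dagger map_mx1 trmx1. Qed.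

Lemma unitary_mulV A : unitary A -> A *m dagger A = 1%:M.
Proof. exact: mulmx1C. Qed.

Lemma unitary_mul A B : unitary A -> unitary B -> unitary (A *m B).
Proof.
rewrite /unitary => uA uB.
by rewrite dagger_mul -mulmxA (mulmxA (dagger A)) uA mul1mx uB.
Qed.

Lemma unitary_dagger A : unitary A -> unitary (dagger A).
Proof. by move=> uA; rewrite /unitary daggerK unitary_mulV. Qed.

Lemma unitary_conjK A B : unitary A -> A *m (dagger A *m B *m A) *m dagger A = B.
Proof.
by move=> uA; rewrite !mulmxA unitary_mulV // mul1mx -mulmxA unitary_mulV // mulmx1.
Qed.

Lemma unitary_conjVK A B : unitary A -> dagger A *m (A *m B *m dagger A) *m A = B.
Proof. by move=> uA; rewrite !mulmxA uA mul1mx -mulmxA uA mulmx1. Qed.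

Lemma mul_delta_mx_entry A B i j a c : (A *m delta_mx i j *m B) a c = A a i * B j c.
Proof.
have AdE k : (A *m delta_mx i j) a k = A a i * (k == j)%:R.
  rewrite mxE (bigD1 i) //= big1 => [|l neq_li]; last by rewrite mxE (negbTE neq_li) mulr0.
  by rewrite mxE eqxx addr0.
rewrite mxE (bigD1 j) //= big1 => [|k neq_kj]; last by rewrite AdE (negbTE neq_kj) mulr0 mul0r.
by rewrite AdE eqxx mulr1 addr0.
Qed.

Lemma mxtrace_delta_mul A i : \tr (delta_mx i i *m A) = A i i.
Proof.
rewrite /mxtrace (bigD1 i) //= big1 ?addr0 => [|k neq_ki].
  by rewrite -[delta_mx i i]mul1mx mul_delta_mx_entry mxE eqxx mul1r.
by rewrite -[delta_mx i i]mul1mx mul_delta_mx_entry !mxE (negbTE neq_ki) mul0r.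
Qed.

End Dagger.

(** * Pauli matrices *)

(* [paulimx x z] is X^x Z^z: it maps the basis vector with bits c to the one
   with bits c + x, with sign (-1)^(z.c). *)
Definition paulimx n (x z : 'rV['F_2]_n) : 'M[algC]_(2 ^ n) :=
  \matrix_(a, c) if bitrow a == bitrow c + x then sgn (dot z (bitrow c)) else 0.

Lemma paulimxM n (x z x' z' : 'rV['F_2]_n) :
  paulimx x z *m paulimx x' z' = sgn (dot z x') *: paulimx (x + x') (z + z').
Proof.
apply/matrixP => a c; rewrite !mxE (bigD1 (rowbits (bitrow c + x'))) //=.
rewrite big1 => [|b neq_b]; last first.
  rewrite !mxE; case: (eqVneq (bitrow b) _) => [eq_b|]; last by rewrite mulr0.
  by move: neq_b; rewrite -eq_b bitrowK eqxx.
rewrite !mxE rowbitsK eqxx addr0 addrA [_ + x' + x]addrAC.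
case: eqP => _; last by rewrite mul0r mulr0.
by rewrite dotDr dotDl !sgnD mulrAC mulrC.
Qed.

Lemma paulimx00 n : paulimx 0 0 = 1%:M :> 'M_(2 ^ n).
Proof.
apply/matrixP => a c; rewrite !mxE addr0 dot0l (inj_eq (@bitrow_inj n)).
by case: eqP.
Qed.

Lemma paulimx_ket0 n (x z : 'rV['F_2]_n) :
  paulimx x z (ket0 n) (ket0 n) = (x == 0)%:R.
Proof. by rewrite mxE bitrow_ket0 add0r dot0r eq_sym; case: eqP. Qed.

Lemma paulimx_neq0 n (x z : 'rV['F_2]_n) : paulimx x z != 0.
Proof.
apply/eqP => /matrixP /(_ (rowbits x) (ket0 n)) /eqP.
by rewrite !mxE rowbitsK bitrow_ket0 add0r eqxx dot0r oner_eq0.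
Qed.

Lemma scaled_paulimx_inj n (c c' : algC) (x z x' z' : 'rV['F_2]_n) :
  c != 0 -> c *: paulimx x z = c' *: paulimx x' z' -> (x, z) = (x', z').
Proof.
move=> c_neq0 /matrixP eq_cc'.
have [eq_x eq_c] : x = x' /\ c = c'.
  have := eq_cc' (rowbits x) (ket0 n).
  rewrite !mxE rowbitsK bitrow_ket0 !add0r eqxx !dot0r sgn0 mulr1.
  case: eqP => [-> | _] /=; last by rewrite mulr0 => c0; rewrite c0 eqxx in c_neq0.
  by rewrite mulr1 => ->.
subst x' c'; congr pair; apply/rowP => j.
have := eq_cc' (rowbits (delta_mx 0 j + x)) (rowbits (delta_mx 0 j)).
rewrite !mxE !rowbitsK eqxx => /(mulfI c_neq0) /sgn_inj.
by rewrite !(dotC _ (delta_mx 0 j)) !dot_deltal.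
Qed.

Lemma paulimx0M n (z z' : 'rV['F_2]_n) :
  paulimx 0 z *m paulimx 0 z' = paulimx 0 (z + z').
Proof. by rewrite paulimxM dot0r sgn0 scale1r addr0. Qed.

Lemma bitrow_eq_add_delta n (a c : 'I_(2 ^ n)) (i : 'I_n) :
  (bitrow a == bitrow c + delta_mx 0 i) =
  (bit a i != bit c i) && [forall j : 'I_n, (j != i) ==> (bit a j == bit c j)].
Proof.
have flip (b b' : bool) : (b%:R == b'%:R + 1 :> 'F_2) = (b != b') by case: b b' => [] [].
have keep (b b' : bool) : (b%:R == b'%:R :> 'F_2) = (b == b') by case: b b' => [] [].
apply/eqP/andP => [/rowP eq_ac | [neq_i /forall_inP eq_j]]; last first.
  apply/rowP => j; rewrite !mxE; apply/eqP; case: (eqVneq j i) => [-> | neq_ji].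
    by rewrite eqxx flip.
  by rewrite andbF addr0 keep eq_j.
split; first by have := eq_ac i; rewrite !mxE !eqxx /= => /eqP; rewrite flip.
apply/forall_inP => j neq_ji.
by have := eq_ac j; rewrite !mxE (negbTE neq_ji) addr0 => /eqP; rewrite keep.
Qed.

Lemma Xop_paulimx n (i : 'I_n) : Xop i = paulimx (delta_mx 0 i) 0.
Proof. by apply/matrixP => a c; rewrite !mxE bitrow_eq_add_delta dot0l sgn0. Qed.

Lemma Zop_paulimx n (i : 'I_n) : Zop i = paulimx 0 (delta_mx 0 i).
Proof.
apply/matrixP => a c; rewrite !mxE addr0 (inj_eq (@bitrow_inj n)) dot_deltal mxE.
by rewrite sgn_nat.
Qed.

Lemma mxpowF2_paulimx n (x z : 'rV['F_2]_n) (e : 'F_2) :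
  mxpowF2 (paulimx x z) e = paulimx (e *: x) (e *: z).
Proof.
by rewrite /mxpowF2; case: (F2_cases e) => ->; rewrite ?eqxx ?scale0r ?paulimx00 ?scale1r.
Qed.

Lemma paulimx_prod n (r : seq 'I_n) (x z : 'rV['F_2]_n) : uniq r ->
  \big[mulmx/1%:M]_(j <- r) paulimx (x 0 j *: delta_mx 0 j) (z 0 j *: delta_mx 0 j)
  = paulimx (\sum_(j <- r) x 0 j *: delta_mx 0 j) (\sum_(j <- r) z 0 j *: delta_mx 0 j).
Proof.
elim: r => [|j r IH] /=; first by rewrite !big_nil paulimx00.
case/andP => j_notin_r uniq_r; rewrite !big_cons IH // paulimxM.
rewrite dotZl dot_deltal summxE big1_seq ?mulr0 ?sgn0 ?scale1r // => k /andP[_ k_in_r].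
rewrite !mxE; case: (eqVneq j k) => [eq_jk | _]; last by rewrite mulr0.
by rewrite eq_jk k_in_r in j_notin_r.
Qed.

Lemma pauliE n (x z : 'rV['F_2]_n) : pauli x z = paulimx x z.
Proof.
have factorE j : mxpowF2 (Xop j) (x 0 j) *m mxpowF2 (Zop j) (z 0 j) =
    paulimx (x 0 j *: delta_mx 0 j) (z 0 j *: delta_mx 0 j).
  rewrite Xop_paulimx Zop_paulimx !mxpowF2_paulimx paulimxM !scaler0 addr0 add0r.
  by rewrite dot0l sgn0 scale1r.
rewrite /pauli /mxprod (eq_bigr _ (fun j _ => factorE j)).
by rewrite paulimx_prod ?index_enum_uniq // -!row_sum_delta.
Qed.

(** * Measurement statistics of stabilizer states *)

Lemma sum_antishift_eq0 (G : finZmodType) (R : numDomainType) (K : pred G) (F : G -> R) t :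
  (forall g, K (g + t) = K g) -> (forall g, K g -> F (g + t) = - F g) ->
  \sum_(g | K g) F g = 0.
Proof.
move=> K_shift F_shift; set S := \sum_(g | K g) F g.
have : S = - S.
  rewrite {1}/S (reindex_inj (addIr t)) /= (eq_bigl K) => [|g]; last by rewrite K_shift.
  by rewrite -sumrN; apply: eq_bigr => g /F_shift.
by move/eqP; rewrite -addr_eq0 -mulr2n mulrn_eq0 /= => /eqP.
Qed.

Lemma sum_sgn_dot n (y : 'rV['F_2]_n) :
  \sum_(z : 'rV['F_2]_n) sgn (dot z y) = if y == 0 then (2 ^ n)%:R else 0.
Proof.
have [-> | y_neq0] := eqVneq y 0.
  by under eq_bigr => z _ do rewrite dot0r sgn0; rewrite sumr_const card_rowF2.
have [j yj_neq0] : exists j, y 0 j != 0.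
  apply/existsP; apply: contraR y_neq0 => /existsPn y0.
  by apply/eqP/rowP => j; rewrite mxE; apply/eqP/negPn/y0.
have yj1 : y 0 j = 1 by case: (F2_cases (y 0 j)) yj_neq0 => ->; rewrite ?eqxx.
apply: (@sum_antishift_eq0 _ _ predT _ (delta_mx 0 j)) => // z _.
by rewrite dotDl dot_deltal yj1 sgnD /sgn oner_neq0 mulrN1.
Qed.

Lemma delta_mx_paulimx n (b : 'I_(2 ^ n)) : delta_mx b b =
  (2 ^ n)%:R^-1 *: \sum_(z : 'rV['F_2]_n) sgn (dot z (bitrow b)) *: paulimx 0 z.
Proof.
apply/matrixP => a c; rewrite !mxE summxE.
under eq_bigr => z _ do rewrite !mxE addr0 (inj_eq (@bitrow_inj n)).
have [<- | neq_ac] := eqVneq a c; last first.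
  have -> : (a == b) && (c == b) = false.
    by apply: contraNF neq_ac => /andP[/eqP -> /eqP ->].
  by rewrite big1 ?mulr0 // => z _; rewrite mulr0.
under eq_bigr => z _ do rewrite -sgnD -dotDr.
rewrite sum_sgn_dot andbb addr_eq0 oppr_F2 (inj_eq (@bitrow_inj n)) eq_sym.
by case: eqP => _; rewrite ?mulr0 // mulVf // pnatr_eq0 expn_eq0.
Qed.

Lemma card_submx (F : finFieldType) m k (A : 'M[F]_(m, k)) :
  #|[set u : 'rV_k | (u <= A)%MS]| = (#|F| ^ \rank A)%N.
Proof.
rewrite -[\rank A]mul1n -card_mx.
have /row_freeP[B baseK] := row_base_free A.
have inj_base : injective (mulmxr (row_base A) : 'rV_(\rank A) -> 'rV_k).
  by apply: can_inj (mulmxr B) _ => u; rewrite /= -mulmxA baseK mulmx1.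
rewrite -(card_image inj_base); apply: eq_card => v.
by rewrite inE -(eq_row_base A) (sameP submxP codomP).
Qed.

Lemma card_kermx (F : finFieldType) m k (A : 'M[F]_(m, k)) :
  #|[set z : 'rV_m | z *m A == 0]| = (#|F| ^ (m - \rank A))%N.
Proof.
rewrite -mxrank_ker -card_submx; apply: eq_card => z.
by rewrite !inE sub_kermx.
Qed.

Definition outcome_prob n (W : 'M[algC]_(2 ^ n)) (b : 'I_(2 ^ n)) : algC :=
  dagger W (ket0 n) b * W b (ket0 n).

Lemma alphaUE n (V U : 'M[algC]_(2 ^ n)) b : alphaU V U b = outcome_prob (U *m dagger V) b.
Proof.
rewrite /alphaU /outcome_prob /proj -mul_delta_mx_entry dagger_mul daggerK.
by rewrite -!mulmxA mxtrace_mulC -!mulmxA mxtrace_delta_mul !mulmxA.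
Qed.

Lemma sum_outcome_prob n (W : 'M[algC]_(2 ^ n)) : unitary W -> \sum_b outcome_prob W b = 1.
Proof.
move/(congr1 (fun M : 'M[algC]_(2 ^ n) => M (ket0 n) (ket0 n))).
by rewrite !mxE eqxx; apply.
Qed.

Lemma outcome_prob_expand n (W : 'M[algC]_(2 ^ n)) b : outcome_prob W b =
  (2 ^ n)%:R^-1 * \sum_z sgn (dot z (bitrow b)) * (dagger W *m paulimx 0 z *m W) (ket0 n) (ket0 n).
Proof.
rewrite /outcome_prob -mul_delta_mx_entry delta_mx_paulimx -scalemxAr -scalemxAl mxE.
rewrite mulmx_sumr mulmx_suml summxE; congr (_ * _); apply: eq_bigr => z _.
by rewrite -scalemxAr -scalemxAl mxE.
Qed.

Lemma conj_paulimx0D n (W : 'M[algC]_(2 ^ n)) z z' : unitary W ->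
  dagger W *m paulimx 0 (z + z') *m W =
  (dagger W *m paulimx 0 z *m W) *m (dagger W *m paulimx 0 z' *m W).
Proof.
move=> unitW; rewrite -paulimx0M !mulmxA; congr (_ *m _).
by rewrite -[_ *m W *m dagger W]mulmxA unitary_mulV // mulmx1.
Qed.

Lemma bigmax_two_valued (R : numDomainType) (I : Type) (r : seq I) (F : I -> R) t :
  0 < t -> (forall i, F i = 0 \/ F i = t) ->
  \big[Num.max/0]_(i <- r) F i = if has (fun i => F i == t) r then t else 0.
Proof.
move=> t_gt0 F0t; elim: r => [|j r IH]; rewrite ?big_nil ?big_cons //= IH.
have [-> | ->] := F0t j; rewrite ?eqxx ?(lt_eqF t_gt0) /=.
  by case: has; rewrite ?maxxx // (max_r (ltW t_gt0)).
by case: has; rewrite ?maxxx // (max_l (ltW t_gt0)).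
Qed.

Section OutcomeDistribution.

Variables (n : nat) (W : 'M[algC]_(2 ^ n)).
Variable lab : 'rV['F_2]_n -> plabel n.
Hypothesis unitW : unitary W.
Hypothesis conjW_lab : forall z, exists c,
  dagger W *m paulimx 0 z *m W = c *: paulimx (lab z).1 (lab z).2.

Local Notation o := (ket0 n).
Local Notation conjZ z := (dagger W *m paulimx 0 z *m W).
Local Notation expect z := (conjZ z o o).

Definition stab := [set z | (lab z).1 == 0].

Lemma expect0 : expect 0 = 1.
Proof. by rewrite paulimx00 mulmx1 unitW mxE eqxx. Qed.

Lemma expect_notin_stab z : z \notin stab -> expect z = 0.
Proof.
rewrite inE => lab_neq0; have [c ->] := conjW_lab z.
by rewrite mxE paulimx_ket0 (negbTE lab_neq0) mulr0.
Qed.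

Lemma conjZ_stab z : z \in stab -> conjZ z = expect z *: paulimx 0 (lab z).2.
Proof.
rewrite inE => /eqP lab0; have [c ->] := conjW_lab z.
by rewrite mxE paulimx_ket0 lab0 eqxx mulr1.
Qed.

Lemma expectD z z' : z \in stab -> z' \in stab -> expect (z + z') = expect z * expect z'.
Proof.
move=> /conjZ_stab stab_z /conjZ_stab stab_z'.
rewrite conj_paulimx0D // {1}stab_z {1}stab_z' -scalemxAl -scalemxAr paulimx0M scalerA [LHS]mxE.
by rewrite paulimx_ket0 eqxx mulr1.
Qed.

Lemma expect_neq0 z : z \in stab -> expect z != 0.
Proof.
move=> stab_z; apply/eqP => ez0.
by have := expectD stab_z stab_z; rewrite addrr_F2 expect0 ez0 mulr0 => /eqP; rewrite oner_eq0.
Qed.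

Lemma stabD z z' : z \in stab -> z' \in stab -> z + z' \in stab.
Proof.
move=> stab_z stab_z'; apply: contraTT (mulf_neq0 (expect_neq0 stab_z) (expect_neq0 stab_z')).
by rewrite -expectD // negbK => /expect_notin_stab ->.
Qed.

Definition top_prob : algC := #|stab|%:R / (2 ^ n)%:R.

Lemma stab0 : 0 \in stab.
Proof. by apply: contraT => /expect_notin_stab /eqP; rewrite expect0 oner_eq0. Qed.

Lemma top_prob_gt0 : 0 < top_prob.
Proof. by rewrite divr_gt0 ?ltr0n ?expn_gt0 //; apply/card_gt0P; exists 0; apply: stab0. Qed.

Lemma outcome_prob_cases b : outcome_prob W b = 0 \/ outcome_prob W b = top_prob.
Proof.
(* [chi] is a +-1 character of the group [stab]: its sum is |stab| if it is trivial, else 0. *)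
pose chi z := sgn (dot z (bitrow b)) * expect z.
have chiD z z' : z \in stab -> z' \in stab -> chi (z + z') = chi z * chi z'.
  by move=> stab_z stab_z'; rewrite /chi dotDl sgnD expectD // mulrACA.
rewrite outcome_prob_expand (bigID (mem stab)) /= [X in _ + X]big1 ?addr0; last first.
  by move=> z /expect_notin_stab ->; rewrite mulr0.
have [chi1 | /forall_inPn [z0 stab_z0 chi_z0]] := boolP [forall z in stab, chi z == 1].
  right; rewrite (eq_bigr (fun _ => 1)) => [|z /(forall_inP chi1)/eqP //].
  by rewrite sumr_const mulrC.
have chi_z0N1 : chi z0 = -1.
  have : chi z0 ^+ 2 == 1 by rewrite expr2 -chiD // addrr_F2 /chi dot0l sgn0 expect0 mulr1.
  by rewrite sqrf_eq1 (negbTE chi_z0) => /eqP.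
left; rewrite (@sum_antishift_eq0 _ _ (mem stab) chi z0) ?mulr0 //.
  move=> z; apply/idP/idP => [stab_zz0|]; last by move/stabD; apply.
  by rewrite -[z]addr0 -(addrr_F2 z0) addrA; apply: stabD.
by move=> z stab_z; rewrite chiD // chi_z0N1 mulrN1.
Qed.

Lemma card_top_prob :
  (#|[set b | outcome_prob W b == top_prob]| * #|stab|)%N = (2 ^ n)%N.
Proof.
set B := [set b | _].
have : \sum_b outcome_prob W b = top_prob *+ #|B|.
  rewrite (bigID (mem B)) /= [X in _ + X]big1 ?addr0 => [|b]; last first.
    by rewrite inE; case: (outcome_prob_cases b) => ->; rewrite ?eqxx.
  by rewrite -sumr_const; apply: eq_bigr => b; rewrite inE => /eqP.
rewrite sum_outcome_prob // -mulr_natr /top_prob mulrAC -natrM.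
move/(congr1 ( *%R^~ (2 ^ n)%:R)); rewrite mul1r divfK ?pnatr_eq0 ?expn_eq0 //.
by move/eqP; rewrite eqr_nat eq_sym mulnC => /eqP.
Qed.

Lemma card_prob0 :
  #|[set b | outcome_prob W b == 0]| = (2 ^ n - #|[set b | outcome_prob W b == top_prob]|)%N.
Proof.
have -> : [set b | outcome_prob W b == 0] = ~: [set b | outcome_prob W b == top_prob].
  apply/setP => b; rewrite !inE.
  have top_neq0 := gt_eqF top_prob_gt0.
  by case: (outcome_prob_cases b) => ->; rewrite ?eqxx ?top_neq0 // eq_sym top_neq0.
by rewrite cardsCs setCK card_ord.
Qed.

Lemma bigmax_outcome_prob : \big[Num.max/0]_b outcome_prob W b = top_prob.
Proof.
have /card_gt0P[b] : (0 < #|[set b | outcome_prob W b == top_prob]|)%N.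
  by rewrite lt0n; apply: contraTneq (expn_gt0 2 n) => card0; rewrite -card_top_prob card0.
rewrite inE (bigmax_two_valued _ top_prob_gt0 outcome_prob_cases) => top_b.
by case: hasP => // [[]]; exists b; rewrite ?mem_index_enum.
Qed.

End OutcomeDistribution.

Lemma conj_paulimx0_tableau n (W : 'M[algC]_(2 ^ n)) C D : unitary W -> z_tableau W C D ->
  forall z, exists c, dagger W *m paulimx 0 z *m W = c *: paulimx (z *m C) (z *m D).
Proof.
move=> unitW tabW z.
pose P u := exists c, dagger W *m paulimx 0 u *m W = c *: paulimx (u *m C) (u *m D).
have -> : z = \sum_(j < n) z 0 j *: delta_mx 0 j by apply: row_sum_delta.
apply: (big_ind P) => [|u u' [c conj_u] [c' conj_u'] | j _].
- by exists 1; rewrite !mul0mx paulimx00 mulmx1 unitW scale1r.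
- exists (c * c' * sgn (dot (u *m D) (u' *m C))).
  rewrite (conj_paulimx0D u u' unitW) conj_u conj_u' -scalemxAl -scalemxAr paulimxM.
  by rewrite !scalerA !mulmxDl.
case: (F2_cases (z 0 j)) => ->.
  by exists 1; rewrite !scale0r !mul0mx paulimx00 mulmx1 unitW scale1r.
have [c tab_j] := tabW j.
by exists c; rewrite !scale1r -Zop_paulimx tab_j pauliE !rowE.
Qed.

Lemma tableau_outcome_counts n (W : 'M[algC]_(2 ^ n)) C D : unitary W -> z_tableau W C D ->
  #|[set b | outcome_prob W b == 2%:R ^- \rank C]| = (2 ^ \rank C)%N /\
  #|[set b | outcome_prob W b == 0]| = (2 ^ n - 2 ^ \rank C)%N.
Proof.
move=> unitW tabW; pose lab (z : 'rV['F_2]_n) := (z *m C, z *m D).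
have labW : forall z, exists c, dagger W *m paulimx 0 z *m W = c *: paulimx (lab z).1 (lab z).2.
  exact: conj_paulimx0_tableau.
have card_stab : #|stab lab| = (2 ^ (n - \rank C))%N.
  have -> : stab lab = [set z | z *m C == 0] by apply/setP => z; rewrite !inE.
  by rewrite card_kermx card_Fp.
have splitn : (2 ^ n = 2 ^ \rank C * 2 ^ (n - \rank C))%N by rewrite -expnD subnKC ?rank_leq_col.
have topE : top_prob lab = 2%:R ^- \rank C.
  rewrite /top_prob card_stab splitn natrM !natrX invfM mulrCA mulfV ?mulr1 //.
  by rewrite expf_neq0 ?pnatr_eq0.
have : (#|[set b | outcome_prob W b == 2%:R ^- \rank C]| * 2 ^ (n - \rank C) =
         2 ^ \rank C * 2 ^ (n - \rank C))%N.
  by rewrite -splitn -card_stab -topE; apply: card_top_prob.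
move/eqP; rewrite eqn_pmul2r ?expn_gt0 // => /eqP card_top.
by split; rewrite // (card_prob0 unitW labW) topE card_top.
Qed.

(** * Clifford conjugation of Pauli labels *)

Definition conj_label n (V : 'M[algC]_(2 ^ n)) (p q : plabel n) : Prop :=
  exists2 c : algC, c != 0 & V *m paulimx p.1 p.2 *m dagger V = c *: paulimx q.1 q.2.

Lemma clifford_conj_label n (V : 'M[algC]_(2 ^ n)) :
  clifford V -> exists sigma, forall p, conj_label V p (sigma p).
Proof.
(* The Clifford property describes V^dag P V; the induced label map is injective, hence
   invertible, and its inverse describes V P V^dag. *)
case=> unitV cliffV.
have : forall p : plabel n, exists q : plabel n,
    exists c, dagger V *m paulimx p.1 p.2 *m V = c *: paulimx q.1 q.2.
  move=> p; have [c [x [z eq_c]]] := cliffV p.1 p.2.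
  by exists (x, z), c; rewrite -!pauliE.
case/fin_all_exists => tau tauP.
have tau_conj p : conj_label V (tau p) p.
  have [c eq_c] := tauP p.
  have c_neq0 : c != 0.
    apply: contra_neq (paulimx_neq0 p.1 p.2) => c0.
    by rewrite -(unitary_conjK (paulimx p.1 p.2) unitV) eq_c c0 scale0r mulmx0 mul0mx.
  exists c^-1; rewrite ?invr_neq0 //.
  rewrite -[in RHS](unitary_conjK (paulimx p.1 p.2) unitV) eq_c.
  by rewrite -scalemxAr -scalemxAl scalerA mulVf ?scale1r.
have tau_inj : injective tau.
  move=> p q eq_pq; have [c _ Vp] := tau_conj p; have [d d_neq0 Vq] := tau_conj q.
  move: Vp; rewrite eq_pq Vq => /(scaled_paulimx_inj d_neq0).
  by rewrite -!surjective_pairing.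
have sigmaP q : exists p, conj_label V q p.
  by have /codomP[p ->] := injF_onto tau_inj q; exists p; apply: tau_conj.
exact: fin_all_exists sigmaP.
Qed.

Lemma conj_label_inj n (V : 'M[algC]_(2 ^ n)) sigma :
  unitary V -> (forall p, conj_label V p (sigma p)) -> injective sigma.
Proof.
move=> unitV sigmaP p q eq_pq.
have [c _ Vp] := sigmaP p; have [d d_neq0 Vq] := sigmaP q.
have : d *: paulimx p.1 p.2 = c *: paulimx q.1 q.2.
  rewrite -(unitary_conjVK (paulimx p.1 p.2) unitV) -(unitary_conjVK (paulimx q.1 q.2) unitV).
  by rewrite Vp Vq eq_pq -!scalemxAr -!scalemxAl !scalerA mulrC.
by move/(scaled_paulimx_inj d_neq0); rewrite -!surjective_pairing.
Qed.

Lemma conj_label00 n (V : 'M[algC]_(2 ^ n)) q : unitary V -> conj_label V (0, 0) q -> q = (0, 0).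
Proof.
move=> unitV [c _]; rewrite paulimx00 mulmx1 unitary_mulV // -(scale1r 1%:M) -{1}(paulimx00 n).
by move/(scaled_paulimx_inj (oner_neq0 _)) ->; rewrite -surjective_pairing.
Qed.

Lemma conj_paulimx0_clifford n (U V : 'M[algC]_(2 ^ n)) C0 D0 sigma :
  unitary U -> z_tableau U C0 D0 -> (forall p, conj_label V p (sigma p)) ->
  forall z, exists c, dagger (U *m dagger V) *m paulimx 0 z *m (U *m dagger V) =
    c *: paulimx (sigma (z *m C0, z *m D0)).1 (sigma (z *m C0, z *m D0)).2.
Proof.
move=> unitU tabU sigmaP z.
have [c eq_c] := conj_paulimx0_tableau unitU tabU z.
have [d _ eq_d] := sigmaP (z *m C0, z *m D0).
exists (c * d).
have -> : dagger (U *m dagger V) *m paulimx 0 z *m (U *m dagger V) =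
    V *m (dagger U *m paulimx 0 z *m U) *m dagger V by rewrite dagger_mul daggerK !mulmxA.
by rewrite eq_c -scalemxAr -scalemxAl eq_d scalerA.
Qed.

(** * Multiplication in GF(2^n) *)

Lemma poly_small_def (R : nzSemiRingType) n (r : {poly R}) :
  (size r <= n)%N -> r = \sum_(i < n) r`_i *: 'X^i.
Proof. by move=> size_r; rewrite -poly_def -[LHS](take_poly_id size_r). Qed.

Lemma vpoly_rVpoly n (u : 'rV['F_2]_n) : vpoly u = rVpoly u.
Proof.
rewrite [in RHS](row_sum_delta u) linear_sum; apply: eq_bigr => j _.
by rewrite linearZ /= rVpoly_delta mul_polyC.
Qed.

Lemma size_vpoly n (u : 'rV['F_2]_n) : (size (vpoly u) <= n)%N.
Proof. by rewrite vpoly_rVpoly size_poly. Qed.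

Lemma vpolyB n (u u' : 'rV['F_2]_n) : vpoly (u - u') = vpoly u - vpoly u'.
Proof. by rewrite !vpoly_rVpoly linearB. Qed.

Lemma vpoly_eq0 n (u : 'rV['F_2]_n) : (vpoly u == 0) = (u == 0).
Proof. by rewrite vpoly_rVpoly -(raddf0 (@rVpoly _ n)) (inj_eq (can_inj rVpolyK)). Qed.

Lemma irredp_coprime_small (R : idomainType) (p q : {poly R}) :
  irreducible_poly p -> q != 0 -> (size q < size p)%N -> coprimep p q.
Proof.
move=> irr_p q_neq0 size_qp; rewrite irreducible_poly_coprime //.
by apply/negP => /(dvdp_leq q_neq0); rewrite leqNgt size_qp.
Qed.

Section GaloisMultiplication.

Variables (n : nat) (P : {poly 'F_2}).
Hypothesis irrP : irreducible_poly P.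
Hypothesis sizeP : size P = n.+1.

Definition coef0_mod (f : {poly 'F_2}) : 'F_2 := (f %% P)`_0.

Lemma coef0_mod0 : coef0_mod 0 = 0.
Proof. by rewrite /coef0_mod mod0p coef0. Qed.

Lemma coef0_modD f g : coef0_mod (f + g) = coef0_mod f + coef0_mod g.
Proof. by rewrite /coef0_mod modpD coefD. Qed.

Lemma coef0_modB f g : coef0_mod (f - g) = coef0_mod f - coef0_mod g.
Proof. by rewrite /coef0_mod modpD modpN coefB. Qed.

Lemma coef0_modZ c f : coef0_mod (c *: f) = c * coef0_mod f.
Proof. by rewrite /coef0_mod modpZl coefZ. Qed.

Lemma size_modP (f : {poly 'F_2}) : (size (f %% P)%R <= n)%N.
Proof. by rewrite -ltnS -sizeP ltn_modp irredp_neq0. Qed.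

Lemma coef0_mod_mul_small (g r : {poly 'F_2}) : (size r <= n)%N ->
  coef0_mod (g * r) = \sum_(i < n) r`_i * coef0_mod (g * 'X^i).
Proof.
move=> size_r; rewrite {1}(poly_small_def size_r) mulr_sumr.
rewrite (big_morph _ coef0_modD coef0_mod0).
by apply: eq_bigr => i _; rewrite -scalerAr coef0_modZ.
Qed.

Lemma alphaGE v (i j : 'I_n) : alphaG P v i j = coef0_mod (vpoly v * 'X^i * 'X^j).
Proof.
have GammaE (p : 'I_n) : Gamma P (p + j) 0 = coef0_mod ('X^j * 'X^p).
  by rewrite /Gamma /coef0_mod -exprD addnC.
rewrite /alphaG mxE
  (eq_bigr (fun p : 'I_n => ((vpoly v * 'X^i) %% P)`_p * coef0_mod ('X^j * 'X^p))).
  by rewrite -coef0_mod_mul_small ?size_modP // /coef0_mod modp_mul mulrC.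
by move=> p _; rewrite !mxE GammaE.
Qed.

Definition alpha_mx v : 'M['F_2]_n := \matrix_(i, j) alphaG P v i j.

Lemma mulmx_alpha_mx (x v : 'rV['F_2]_n) (j : 'I_n) :
  (x *m alpha_mx v) 0 j = coef0_mod (vpoly v * vpoly x * 'X^j).
Proof.
rewrite mxE [vpoly x]/vpoly mulr_sumr mulr_suml (big_morph _ coef0_modD coef0_mod0).
by apply: eq_bigr => i _; rewrite mxE alphaGE mul_polyC -scalerAr -scalerAl coef0_modZ.
Qed.

Lemma alpha_mx_inj (x : 'rV['F_2]_n) : x != 0 -> injective (fun v => x *m alpha_mx v).
Proof.
(* Otherwise [coef0_mod] kills g r for every r of degree < n, where g is invertible mod P. *)
move=> x_neq0 v w /= /rowP eq_vw; apply/eqP; rewrite -subr_eq0; apply: contraT => neq_vw.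
set g := vpoly (v - w) * vpoly x.
have g_ann (j : 'I_n) : coef0_mod (g * 'X^j) = 0.
  have := eq_vw j; rewrite !mulmx_alpha_mx => /eqP.
  by rewrite -subr_eq0 -coef0_modB -!mulrBl -vpolyB => /eqP.
have coprime_g : coprimep P g.
  by rewrite coprimepMr !irredp_coprime_small ?vpoly_eq0 ?sizeP ?ltnS ?size_vpoly.
have [[a b] /= bezout] := Bezout_eq1_coprimepP _ _ coprime_g.
have : coef0_mod (g * (b %% P)) = 1.
  rewrite /coef0_mod modp_mul mulrC -[(b * g) %% P]add0r -(modp_mull a P) -modpD bezout.
  by rewrite modp_small ?coef1 // size_poly1 irrP.1.
rewrite coef0_mod_mul_small ?size_modP // big1 => [/eqP | i _]; last by rewrite g_ann mulr0.
by rewrite eq_sym oner_eq0.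
Qed.

End GaloisMultiplication.

(** * The Z-label spaces of the ensemble *)

Lemma card_preim_range (A B : finType) (f : A -> B) (in_range : pred B) (T : {set B}) :
  injective f -> (forall b, reflect (exists a, b = f a) (in_range b)) ->
  #|[set a | f a \in T]| = (\sum_(b in T) in_range b)%N.
Proof.
move=> inj_f rangeP; rewrite -(card_imset _ inj_f).
rewrite (eq_bigr (fun b => if in_range b then 1 else 0)%N) => [|b _]; last by case: (in_range b).
rewrite -big_mkcondr sum1dep_card; apply: eq_card => b; rewrite inE.
apply/imsetP/andP => [[a] | [b_T /rangeP[a eq_b]]]; last by exists a; rewrite ?inE -?eq_b.
by rewrite inE => fa_T ->; split => //; apply/rangeP; exists a.
Qed.

Section Spread.

Variables (n : nat) (M : 'rV['F_2]_n -> 'M['F_2]_n).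
Hypothesis M_inj : forall x : 'rV['F_2]_n, x != 0 -> injective (fun v => x *m M v).

Lemma spread_incidence (t : plabel n) :
  ((t.1 == 0%R) + \sum_v (t.2 == t.1 *m M v))%N =
  (if t == (0%R, 0%R) then (2 ^ n).+1 else 1)%N.
Proof.
case: t => x y /=; rewrite xpair_eqE.
have [-> | x_neq0] := eqVneq x 0.
  under eq_bigr => v _ do rewrite mul0mx.
  by rewrite sum_nat_const card_rowF2; case: (y == 0); rewrite ?muln1 ?muln0.
rewrite (eq_bigr (fun v => if x *m M v == y then 1 else 0)%N) => [|v _]; last first.
  by rewrite eq_sym; case: eqP.
rewrite -big_mkcond sum1dep_card /=.
transitivity #|(fun v => x *m M v) @^-1: [set y]|; first by apply: eq_card => v; rewrite !inE.
by rewrite card_preimset ?cards1 //; apply: M_inj.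
Qed.

Lemma spread_count (T : {set plabel n}) : (0, 0) \in T ->
  (#|[set z | (0%R, z) \in T]| + \sum_v #|[set z | (z, z *m M v) \in T]|)%N = (#|T| + 2 ^ n)%N.
Proof.
move=> T0.
have cardL : #|[set z | (0%R, z) \in T]| = (\sum_(t in T) (t.1 == 0%R))%N.
  apply: card_preim_range => [z z' [] // | t]; apply: (iffP eqP) => [t1_0 | [z ->] //].
  by exists t.2; rewrite -t1_0 -surjective_pairing.
have cardG v : #|[set z | (z, z *m M v) \in T]| = (\sum_(t in T) (t.2 == t.1 *m M v))%N.
  apply: card_preim_range => [z z' [] // | t]; apply: (iffP eqP) => [t2E | [z ->] //].
  by exists t.1; rewrite -t2E -surjective_pairing.
rewrite cardL (eq_bigr _ (fun v _ => cardG v)) exchange_big -big_split /=.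
rewrite (eq_bigr _ (fun t _ => spread_incidence t)) (bigD1 (0, 0)) //= eqxx.
rewrite (eq_bigr (fun _ => 1%N)) => [|t /andP[_ /negbTE ->] //].
rewrite sum1dep_card (cardsD1 (0, 0) T) T0.
have -> : #|[set t | (t \in T) && (t != (0, 0))]| = #|T :\ (0, 0)|.
  by apply: eq_card => t; rewrite !inE andbC.
by rewrite add1n addSn addnC.
Qed.

End Spread.

Lemma z_tableau1 n : z_tableau (1%:M : 'M[algC]_(2 ^ n)) 0 1%:M.
Proof.
by move=> i; exists 1; rewrite dagger1 mul1mx mulmx1 scale1r pauliE Zop_paulimx row0 row1.
Qed.

Lemma z_tableau_MUB n (P : {poly 'F_2}) (Uf : 'rV['F_2]_n -> 'M[algC]_(2 ^ n)) v :
  MUB_family P Uf -> z_tableau (Uf v) 1%:M (alpha_mx P v).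
Proof.
move=> mubU i; have [s ->] := (mubU v).2 i.
exists ((-1) ^+ s * 'i ^+ (alphaG P v i i != 0)); rewrite /gen.
have -> : mxprod (fun j : 'I_n => mxpowF2 (Zop j) (alphaG P v i j)) =
          pauli 0 (row i (alpha_mx P v)).
  by apply: eq_bigr => j _; rewrite !mxE /mxpowF2 eqxx mul1mx.
by rewrite scalerA row1 !pauliE Xop_paulimx paulimxM dot0l sgn0 scale1r addr0 add0r.
Qed.

Lemma maxalpha_conj_label n (V U : 'M[algC]_(2 ^ n)) C0 D0 sigma :
  unitary V -> unitary U -> z_tableau U C0 D0 -> (forall p, conj_label V p (sigma p)) ->
  maxalpha V U =
  #|[set z | (z *m C0, z *m D0) \in [set t | (sigma t).1 == 0]]|%:R / (2 ^ n)%:R.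
Proof.
move=> unitV unitU tabU sigmaP.
have unitW := unitary_mul unitU (unitary_dagger unitV).
rewrite /maxalpha (eq_bigr _ (fun b _ => alphaUE V U b)).
rewrite (bigmax_outcome_prob unitW (conj_paulimx0_clifford unitU tabU sigmaP)).
by congr (_%:R / _); apply: eq_card => z; rewrite !inE.
Qed.

Lemma card_conj_label_Z n (V : 'M[algC]_(2 ^ n)) sigma :
  unitary V -> (forall p, conj_label V p (sigma p)) ->
  #|[set t : plabel n | (sigma t).1 == 0]| = (2 ^ n)%N.
Proof.
move=> unitV sigmaP.
have -> : [set t | (sigma t).1 == 0] = sigma @^-1: [set (0, z) | z : 'rV['F_2]_n].
  apply/setP => t; rewrite !inE; apply/eqP/imsetP => [Z_t | [z _ ->] //].
  by exists (sigma t).2; rewrite ?inE // -Z_t -surjective_pairing.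
rewrite card_preimset ?card_imset ?card_rowF2 // => [z z' [] // |].
exact: conj_label_inj sigmaP.
Qed.

Unset Implicit Arguments.

Theorem lemma2 (n : nat) (P : {poly 'F_2}) (Uf : 'rV['F_2]_n -> 'M[algC]_(2 ^ n))
    (V : 'M[algC]_(2 ^ n)) :
  irreducible_poly P -> size P = n.+1 ->
  MUB_family P Uf -> clifford V ->
  maxalpha V 1%:M + \sum_(v : 'rV['F_2]_n) maxalpha V (Uf v) = 2 /\
  (forall U : 'M[algC]_(2 ^ n), (U = 1%:M \/ exists v, U = Uf v) ->
   forall C D : 'M['F_2]_n, z_tableau (U *m dagger V) C D ->
     #|[set b : 'I_(2 ^ n) | alphaU V U b == (2%:R ^- (\rank C))]| = (2 ^ \rank C)%N /\
     #|[set b : 'I_(2 ^ n) | alphaU V U b == 0]| = (2 ^ n - 2 ^ \rank C)%N).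
Proof.
move=> irrP sizeP mubU cliffV; have unitV : unitary V := cliffV.1.
have unitU U : U = 1%:M \/ (exists v, U = Uf v) -> unitary U.
  by case=> [-> | [v ->]]; [rewrite /unitary dagger1 mul1mx | exact: (mubU v).1.1].
split; last first.
  move=> U /unitU unitU' C D tabW.
  have alphaE x : [set b | alphaU V U b == x] = [set b | outcome_prob (U *m dagger V) b == x].
    by apply/setP => b; rewrite !inE alphaUE.
  rewrite !alphaE.
  exact: tableau_outcome_counts (unitary_mul unitU' (unitary_dagger unitV)) tabW.
have [sigma sigmaP] := clifford_conj_label cliffV.
rewrite (maxalpha_conj_label unitV (unitU _ (or_introl erefl)) (@z_tableau1 n) sigmaP).
under eq_bigr => v _ do
  rewrite (maxalpha_conj_label unitV (mubU v).1.1 (z_tableau_MUB v mubU) sigmaP).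
rewrite -mulr_suml -mulrDl -natr_sum -natrD.
set T := [set t | (sigma t).1 == 0].
have T0 : (0, 0) \in T by rewrite inE (conj_label00 unitV (sigmaP (0, 0))).
have card1 : #|[set z | (z *m 0, z *m 1%:M) \in T]| = #|[set z | (0, z) \in T]|.
  by apply: eq_card => z; rewrite !inE mulmx0 mulmx1.
have cardMUB v : #|[set z | (z *m 1%:M, z *m alpha_mx P v) \in T]| =
                 #|[set z | (z, z *m alpha_mx P v) \in T]|.
  by apply: eq_card => z; rewrite !inE mulmx1.
rewrite card1 (eq_bigr _ (fun v _ => cardMUB v)) (spread_count (alpha_mx_inj irrP sizeP) T0).
by rewrite (card_conj_label_Z unitV sigmaP) addnn -mul2n natrM mulfK ?pnatr_eq0 ?expn_eq0.
Qed.
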